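(* Let $d_1,d_2,\alpha,\beta>0$ be fixed, let $u_c=\tfrac12$, and for $\mu>0$ define $$k_c^2=\sqrt{\frac{\mu\beta}{d_1d_2}},\quad \chi_c=\frac{\mu d_2+\beta d_1+2\sqrt{d_1d_2\mu\beta}}{\alpha u_c(1-u_c)},\quad M=\frac{\beta+k_c^2d_2}{\alpha},\quad M^*=\frac{\alpha}{\mu+d_1k_c^2},$$ $$G(\mu)=\frac14\chi_cM^2k_c^2-4\mu M^3+\frac{2\mu^2M^3(\beta+4k_c^2d_2)}{\alpha\chi_ck_c^2-(\mu+4k_c^2d_1)(\beta+4k_c^2d_2)},\qquad L(\mu)=\frac{G(\mu)\,M^*}{1+MM^*}.$$ Then the cubic Stuart–Landau amplitude equation $\frac{dA}{dT_2}=\sigma A-L(\mu)A^3$ (with $\sigma>0$) is supercritical, i.e. $L(\mu)>0$, for all sufficiently small $\mu>0$, and subcritical, i.e. $L(\mu)<0$, for all sufficiently large $\mu$.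
   Context: This concerns the volume-filling chemotaxis system $u_t=(d_1u_x-\chi u(1-u)v_x)_x+\mu u(1-u/u_c)$, $v_t=d_2v_{xx}+\alpha u-\beta v$ near the uniform steady state $(u_c,\alpha u_c/\beta)$, where $\chi_c$ is the critical chemotactic coefficient and $k_c$ the critical wavenumber. In the weakly nonlinear expansion $\chi=\chi_c+\varepsilon^2\chi_2+\dots$, the amplitude $A$ of the leading-order pattern $\varepsilon A\,(M,1)^T\cos(k_cx)$ obeys $\frac{dA}{dT_2}=\sigma A-LA^3$ with $\sigma=\frac{k_c^2\chi_2u_c(1-u_c)M^*}{1+MM^*}>0$ and, for $u_c=\tfrac12$, the Landau coefficient $L$ given by the displayed formula. The equation is called supercritical if $L>0$ and subcritical if $L<0$. *)

From Stdlib Require Import Reals.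
Open Scope R_scope.

Definition uc : R := 1/2.

Definition kc2 (d1 d2 beta mu : R) : R := sqrt (mu * beta / (d1 * d2)).

Definition chic (d1 d2 alpha beta mu : R) : R :=
  (mu * d2 + beta * d1 + 2 * sqrt (d1 * d2 * mu * beta)) / (alpha * uc * (1 - uc)).

Definition Mc (d1 d2 alpha beta mu : R) : R :=
  (beta + kc2 d1 d2 beta mu * d2) / alpha.

Definition Mstar (d1 d2 alpha beta mu : R) : R :=
  alpha / (mu + d1 * kc2 d1 d2 beta mu).

Definition Gfun (d1 d2 alpha beta mu : R) : R :=
  let k2 := kc2 d1 d2 beta mu in
  let chi := chic d1 d2 alpha beta mu in
  let M := Mc d1 d2 alpha beta mu in
  1/4 * chi * M^2 * k2 - 4 * mu * M^3
  + (2 * mu^2 * M^3 * (beta + 4 * k2 * d2))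
    / (alpha * chi * k2 - (mu + 4 * k2 * d1) * (beta + 4 * k2 * d2)).

Definition Lfun (d1 d2 alpha beta mu : R) : R :=
  let M := Mc d1 d2 alpha beta mu in
  let Ms := Mstar d1 d2 alpha beta mu in
  Gfun d1 d2 alpha beta mu * Ms / (1 + M * Ms).

Definition supercritical (L : R) : Prop := L > 0.
Definition subcritical (L : R) : Prop := L < 0.

(** With [t = k_c^2] we have [mu = d1 d2 t^2 / beta] and [sqrt (d1 d2 mu beta) = d1 d2 t],
    so the denominator of the last term of [G] collapses to [-9 mu beta].  In the
    scaled wavenumber [w = d2 t / beta] this gives
    [G = M^2 t d1 beta / alpha * (1 - 20/9 w - 37/9 w^2 - 8/9 w^3)], and [L] has the
    sign of this cubic.  Since [w^2 = d2 mu / (beta d1)], small [mu] gives small [w],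
    where the cubic is positive, and large [mu] gives [w >= 1/2], where it is negative. *)

From Stdlib Require Import Reals Lra Psatz.
Open Scope R_scope.

Definition landau_cubic (w : R) : R := 1 - 20/9 * w - 37/9 * w^2 - 8/9 * w^3.

Lemma landau_cubic_pos (w : R) : 0 <= w -> w <= 1/4 -> 0 < landau_cubic w.
Proof. unfold landau_cubic; intros; nra. Qed.

Lemma landau_cubic_neg (w : R) : 1/2 <= w -> landau_cubic w < 0.
Proof. unfold landau_cubic; intros; nra. Qed.

Section Landau_coefficient.

Variables d1 d2 alpha beta : R.
Hypotheses (hd1 : 0 < d1) (hd2 : 0 < d2) (halpha : 0 < alpha) (hbeta : 0 < beta).

Definition scaled_kc2 (mu : R) : R := d2 * kc2 d1 d2 beta mu / beta.

Lemma kc2_pos (mu : R) : 0 < mu -> 0 < kc2 d1 d2 beta mu.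
Proof. intros hmu; apply sqrt_lt_R0, Rdiv_lt_0_compat; nra. Qed.

Lemma kc2_sqr (mu : R) : 0 < mu -> kc2 d1 d2 beta mu * kc2 d1 d2 beta mu = mu * beta / (d1 * d2).
Proof. intros hmu; apply sqrt_sqrt, Rlt_le, Rdiv_lt_0_compat; nra. Qed.

Lemma scaled_kc2_pos (mu : R) : 0 < mu -> 0 < scaled_kc2 mu.
Proof. intros hmu; pose proof (kc2_pos mu hmu); apply Rdiv_lt_0_compat; nra. Qed.

Lemma scaled_kc2_sqr (mu : R) : 0 < mu -> scaled_kc2 mu ^ 2 = d2 * mu / (beta * d1).
Proof.
  intros hmu; unfold scaled_kc2.
  replace ((d2 * kc2 d1 d2 beta mu / beta) ^ 2)
    with (d2 * d2 * (kc2 d1 d2 beta mu * kc2 d1 d2 beta mu) / (beta * beta)) by (field; lra).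
  rewrite kc2_sqr by exact hmu; field; lra.
Qed.

Lemma Gfun_factor (mu : R) : 0 < mu ->
  Gfun d1 d2 alpha beta mu =
  Mc d1 d2 alpha beta mu ^ 2 * kc2 d1 d2 beta mu * d1 * beta / alpha * landau_cubic (scaled_kc2 mu).
Proof.
  intros hmu; unfold Gfun, chic, landau_cubic, scaled_kc2, Mc, uc; cbv zeta.
  pose proof (kc2_pos mu hmu) as ht; pose proof (kc2_sqr mu hmu) as htt.
  set (t := kc2 d1 d2 beta mu) in *.
  assert (hmu_t : mu = t * t * d1 * d2 / beta) by (rewrite htt; field; lra).
  assert (hsqrt : sqrt (d1 * d2 * mu * beta) = d1 * d2 * t).
  { assert (hd12 : 0 < d1 * d2) by nra.
    apply sqrt_lem_1; [| nra | rewrite hmu_t; field; lra].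
    apply Rlt_le, Rmult_lt_0_compat; [apply Rmult_lt_0_compat |]; lra. }
  assert (hden : alpha * ((mu * d2 + beta * d1 + 2 * (d1 * d2 * t)) / (alpha * (1/2) * (1 - 1/2))) * t
                 - (mu + 4 * t * d1) * (beta + 4 * t * d2) = -9 * mu * beta).
  { rewrite hmu_t; field; lra. }
  rewrite hsqrt, hden, hmu_t; field; lra.
Qed.

Lemma Lfun_factor (mu : R) : 0 < mu ->
  exists c : R, 0 < c /\ Lfun d1 d2 alpha beta mu = c * landau_cubic (scaled_kc2 mu).
Proof.
  intros hmu; pose proof (kc2_pos mu hmu) as ht.
  set (M := Mc d1 d2 alpha beta mu); set (Ms := Mstar d1 d2 alpha beta mu).
  assert (hM : 0 < M) by (apply Rdiv_lt_0_compat; nra).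
  assert (hMs : 0 < Ms) by (apply Rdiv_lt_0_compat; nra).
  exists (M ^ 2 * kc2 d1 d2 beta mu * d1 * beta / alpha * (Ms / (1 + M * Ms))); split.
  - assert (0 < M ^ 2 * kc2 d1 d2 beta mu * d1 * beta).
    { pose proof (pow_lt M 2 hM).
      apply Rmult_lt_0_compat; [apply Rmult_lt_0_compat; [apply Rmult_lt_0_compat |] |]; lra. }
    apply Rmult_lt_0_compat; apply Rdiv_lt_0_compat; nra.
  - unfold Lfun; cbv zeta; rewrite Gfun_factor by exact hmu; fold M Ms; field; split; [nra | lra].
Qed.

Lemma scaled_kc2_lt (mu a : R) : 0 < mu -> 0 < a ->
  mu < beta * d1 * a ^ 2 / d2 -> scaled_kc2 mu < a.
Proof.
  intros hmu ha hsmall; pose proof (scaled_kc2_pos mu hmu) as hw.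
  assert (hw2 : scaled_kc2 mu ^ 2 < a ^ 2).
  { rewrite scaled_kc2_sqr by exact hmu.
    apply Rmult_lt_reg_r with (beta * d1); [nra |].
    replace (d2 * mu / (beta * d1) * (beta * d1)) with (d2 * mu) by (field; lra).
    apply Rmult_lt_compat_l with (r := d2) in hsmall; [| lra].
    replace (d2 * (beta * d1 * a ^ 2 / d2)) with (a ^ 2 * (beta * d1)) in hsmall by (field; lra).
    exact hsmall. }
  nra.
Qed.

Lemma scaled_kc2_gt (mu a : R) : 0 < mu -> 0 < a ->
  beta * d1 * a ^ 2 / d2 < mu -> a < scaled_kc2 mu.
Proof.
  intros hmu ha hlarge; pose proof (scaled_kc2_pos mu hmu) as hw.
  assert (hw2 : a ^ 2 < scaled_kc2 mu ^ 2).
  { rewrite scaled_kc2_sqr by exact hmu.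
    apply Rmult_lt_reg_r with (beta * d1); [nra |].
    replace (d2 * mu / (beta * d1) * (beta * d1)) with (d2 * mu) by (field; lra).
    apply Rmult_lt_compat_l with (r := d2) in hlarge; [| lra].
    replace (d2 * (beta * d1 * a ^ 2 / d2)) with (a ^ 2 * (beta * d1)) in hlarge by (field; lra).
    exact hlarge. }
  nra.
Qed.

End Landau_coefficient.

Theorem mainTheorem2 (d1 d2 alpha beta : R)
  (hd1 : 0 < d1) (hd2 : 0 < d2) (halpha : 0 < alpha) (hbeta : 0 < beta) :
  (exists mu0 : R, 0 < mu0 /\
     forall mu : R, 0 < mu -> mu < mu0 -> supercritical (Lfun d1 d2 alpha beta mu))
  /\
  (exists mu1 : R,
     forall mu : R, mu1 < mu -> subcritical (Lfun d1 d2 alpha beta mu)).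
Proof.
  split.
  - exists (beta * d1 * (1/4) ^ 2 / d2); split; [apply Rdiv_lt_0_compat; nra |].
    intros mu hmu hsmall; unfold supercritical.
    destruct (Lfun_factor d1 d2 alpha beta hd1 hd2 halpha hbeta mu hmu) as [c [hc ->]].
    pose proof (scaled_kc2_pos d1 d2 beta hd1 hd2 hbeta mu hmu).
    pose proof (scaled_kc2_lt d1 d2 beta hd1 hd2 hbeta mu (1/4) hmu ltac:(lra) hsmall).
    apply Rmult_lt_0_compat; [exact hc | apply landau_cubic_pos; lra].
  - exists (beta * d1 * (1/2) ^ 2 / d2); intros mu hlarge; unfold subcritical.
    assert (hmu : 0 < mu).
    { assert (0 < beta * d1 * (1/2) ^ 2 / d2) by (apply Rdiv_lt_0_compat; nra); lra. }
    destruct (Lfun_factor d1 d2 alpha beta hd1 hd2 halpha hbeta mu hmu) as [c [hc ->]].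
    pose proof (scaled_kc2_gt d1 d2 beta hd1 hd2 hbeta mu (1/2) hmu ltac:(lra) hlarge).
    pose proof (landau_cubic_neg (scaled_kc2 d1 d2 beta mu) ltac:(lra)).
    nra.
Qed.
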